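(* Fix mixture proportions $\pi_1,\ldots,\pi_M\in(0,1)$ with $\sum_i\pi_i=1$ and a kernel $K$ on $\{1,\ldots,M\}$ with $\sum_i\pi_iK(i,i)-\sum_{i,j}\pi_i\pi_jK(i,j)>0$. Let $W$ be a random variable and, for $i=1,\ldots,M$, let $Y_i$ be a random element of a measurable space $\mathcal Z$ defined jointly with $W$, with $Y_i\sim P_i$ (the law of $W$ being the same in each pair). Denote by $\eta(Y_1|W,\ldots,Y_M|W)$ the KMD of the conditional distributions of $Y_1,\ldots,Y_M$ given $W$. Then $$\mathbb E_W\big[\eta(Y_1|W,\ldots,Y_M|W)\big]\ge\eta(P_1,\ldots,P_M).$$
   Context: A kernel on $\{1,\ldots,M\}$ is a symmetric $K$ with $[K(i,j)]$ positive semidefinite. For probability measures $R_1,\dots,R_M$ on $\mathcal Z$: let $(\tilde Z,\tilde\Delta)$ have $\mathbb P(\tilde\Delta=i)=\pi_i$ and $\tilde Z\mid\tilde\Delta=i\sim R_i$; let $(\tilde Z_1,\tilde\Delta_1),(\tilde Z_2,\tilde\Delta_2)$ be i.i.d. copies; let $\tilde\Delta'$ satisfy $(\tilde Z,\tilde\Delta')\overset d=(\tilde Z,\tilde\Delta)$ with $\tilde\Delta,\tilde\Delta'$ conditionally independent given $\tilde Z$. The KMD is $$\eta(R_1,\ldots,R_M)=\frac{\mathbb E[K(\tilde\Delta,\tilde\Delta')]-\mathbb E[K(\tilde\Delta_1,\tilde\Delta_2)]}{\mathbb E[K(\tilde\Delta,\tilde\Delta)]-\mathbb E[K(\tilde\Delta_1,\tilde\Delta_2)]}.$$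 *)

From HB Require Import structures.
From mathcomp Require Import all_boot all_order all_algebra.
From mathcomp Require Import all_classical all_reals all_analysis.
Set Implicit Arguments. Unset Strict Implicit. Unset Printing Implicit Defensive.
Import Order.TTheory GRing.Theory Num.Theory.
Local Open Scope classical_set_scope.
Local Open Scope ring_scope.

Definition is_kernel (R : realType) (M : nat) (K : 'I_M -> 'I_M -> R) : Prop :=
  (forall i j, K i j = K j i) /\
  (forall v : 'I_M -> R, 0 <= \sum_(i < M) \sum_(j < M) v i * v j * K i j).

(* Setting of the KMD: Delta ~ pi, Z | Delta = i ~ Rm i.
   [q] is a version of the conditional probabilities q j z = P(Delta = j | Z = z):
   measurable, [0,1]-valued, and for every measurable A,
     P(Delta = j, Z \in A) = E[ q j Z ; Z \in A ],
   i.e. pi_j Rm_j(A) = sum_i pi_i \int_A q_j dRm_i. *)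
Definition is_cond_prob d (T : measurableType d) (R : realType) (M : nat)
    (pi : 'I_M -> R) (Rm : 'I_M -> {measure set T -> \bar R})
    (q : 'I_M -> T -> R) : Prop :=
  forall j, [/\ measurable_fun setT (q j),
    (forall z, 0 <= q j z <= 1) &
    forall A, measurable A ->
      ((pi j)%:E * Rm j A =
       \sum_(i < M) (pi i)%:E * \int[Rm i]_(z in A) (q j z)%:E)%E].

(* A chosen version of the conditional probabilities (a version exists by
   Radon-Nikodym; all versions agree almost surely). *)
Definition cond_prob d (T : measurableType d) (R : realType) (M : nat)
    (pi : 'I_M -> R) (Rm : 'I_M -> {measure set T -> \bar R}) : 'I_M -> T -> R :=
  match pselect (exists q, is_cond_prob pi Rm q) with
  | left h => projT1 (cid h)
  | right _ => fun _ _ => 0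
  end.

(* E[K(Delta, Delta')], Delta' conditionally independent copy given Z:
   E[K(Delta,Delta')] = E[ E[K(Delta,Delta') | Delta, Z] ]
                      = sum_i pi_i \int sum_j K(i,j) P(Delta'=j | Z=z) dRm_i(z). *)
Definition EK_cond d (T : measurableType d) (R : realType) (M : nat)
    (pi : 'I_M -> R) (K : 'I_M -> 'I_M -> R)
    (Rm : 'I_M -> {measure set T -> \bar R}) : R :=
  let q := cond_prob pi Rm in
  \sum_(i < M) pi i *
    fine (\int[Rm i]_z (\sum_(j < M) K i j * q j z)%:E)%E.

Definition EK_diag (R : realType) (M : nat) (pi : 'I_M -> R)
    (K : 'I_M -> 'I_M -> R) : R :=
  \sum_(i < M) pi i * K i i.

Definition EK_indep (R : realType) (M : nat) (pi : 'I_M -> R)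
    (K : 'I_M -> 'I_M -> R) : R :=
  \sum_(i < M) \sum_(j < M) pi i * pi j * K i j.

Definition KMD d (T : measurableType d) (R : realType) (M : nat)
    (pi : 'I_M -> R) (K : 'I_M -> 'I_M -> R)
    (Rm : 'I_M -> {measure set T -> \bar R}) : R :=
  (EK_cond pi K Rm - EK_indep pi K) / (EK_diag pi K - EK_indep pi K).

(* Write r for the conditional probabilities r_j(z) = P(Delta = j | Z = z)
   attached to measures R_1, ..., R_M.  By their defining property,
   sum_i pi_i \int f_i dR_i = sum_i pi_i \int sum_j r_j f_j dR_i, so
   E[K(Delta, Delta')] = sum_i pi_i \int (K r)_i dR_i = sum_i pi_i \int r^T K r dR_i.
   Since K is positive semidefinite, 2 r^T K q - q^T K q <= r^T K r, hence
   E[K(Delta, Delta')] is the maximum over bounded q of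
     T_R(q) = sum_i pi_i \int (2 (K q)_i - q^T K q) dR_i,
   attained at q = r.  For fixed q, T_R(q) is linear in the R_i, and each
   P_i = \int kappa_i(w) dmu_W(w) mixes the conditional laws of Y_i given W;
   so, with q the conditional probabilities attached to P_1, ..., P_M,
     E[K(Delta, Delta')](P) = T_P(q) = E_W[T_{Y|W}(q)]
                            <= E_W[E[K(Delta, Delta')](Y|W)].
   The other two terms of the KMD do not depend on the measures, and the KMD
   is an increasing affine function of E[K(Delta, Delta')]. *)

From HB Require Import structures.
From mathcomp Require Import all_boot all_order all_algebra.
From mathcomp Require Import all_classical all_reals all_analysis.
From mathcomp Require Import measurable_realfun.
From mathcomp Require Import ring lra.
Set Implicit Arguments. Unset Strict Implicit. Unset Printing Implicit Defensive.
Import Order.TTheory GRing.Theory Num.Theory.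
Local Open Scope classical_set_scope.
Local Open Scope ring_scope.

Lemma measurable_funV d (T : measurableType d) (R : realType) (f : T -> R) :
  measurable_fun setT f -> measurable_fun setT (fun x => (f x)^-1).
Proof.
move=> mf; apply: (measurableT_comp _ mf).
have -> : [set: R] = [set 0] `|` ~` [set 0] by rewrite setUv.
apply/measurable_funU => //; first exact: measurableC.
split.
- move=> _ B mB; have [B0|B0] := pselect (B (0^-1)).
    rewrite (_ : _ `&` _ = [set 0])//; apply/seteqP; split => x /=.
      by case.
    by move=> ->; split.
  rewrite (_ : _ `&` _ = set0)//; apply/seteqP; split => x //=.
  by case=> -> /=.
- apply: open_continuous_measurable_fun.
    by rewrite openC; exact/accessible_closed_set1/hausdorff_accessible/Rhausdorff.
  by move=> x; rewrite inE /= => /eqP x0; exact: inv_continuous.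
Qed.

Section kform.
Context (R : realType) (M : nat) (K : 'I_M -> 'I_M -> R).

Definition kmul (v : 'I_M -> R) i := \sum_(k < M) K i k * v k.

Definition kform (u v : 'I_M -> R) := \sum_(j < M) u j * kmul v j.

Lemma kform_tangent_le u v : is_kernel K ->
  2 * kform u v - kform v v <= kform u u.
Proof.
move=> [Ksym Kpsd].
have kformC w w' : kform w w' = kform w' w.
  rewrite /kform /kmul; under eq_bigr do rewrite mulr_sumr.
  rewrite exchange_big; apply: eq_bigr => k _; rewrite mulr_sumr.
  by apply: eq_bigr => j _; rewrite Ksym; ring.
have kformBl w w' w'' : kform (w - w') w'' = kform w w'' - kform w' w''.
  by rewrite /kform -sumrB; apply: eq_bigr => j _; rewrite mulrBl.
have kformBr w w' w'' : kform w (w' - w'') = kform w w' - kform w w''.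
  rewrite /kform /kmul -sumrB; apply: eq_bigr => j _; rewrite -mulrBr; congr (_ * _).
  by rewrite -sumrB; apply: eq_bigr => k _; rewrite mulrBr.
have : 0 <= kform (u - v) (u - v).
  have := Kpsd (u - v); congr (_ <= _); apply: eq_bigr => j _.
  by rewrite /kmul mulr_sumr; apply: eq_bigr => k _; ring.
rewrite kformBl !kformBr (kformC v u); lra.
Qed.

End kform.

Definition bounded_measurable d (T : measurableType d) (R : realType) (f : T -> R) :=
  measurable_fun setT f /\ exists C, forall x, `|f x| <= C.

Section bounded_measurable.
Context d (T : measurableType d) (R : realType).
Implicit Types f g : T -> R.

Lemma bounded_measurable_cst (c : R) : bounded_measurable (fun _ : T => c).
Proof. by split; [exact: measurable_cst | exists `|c|]. Qed.

Lemma bounded_measurableD f g : bounded_measurable f -> bounded_measurable g ->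
  bounded_measurable (fun x => f x + g x).
Proof.
move=> [mf [C HC]] [mg [D HD]]; split; first exact: measurable_funD.
by exists (C + D) => x; apply: le_trans (ler_normD _ _) _; exact: lerD.
Qed.

Lemma bounded_measurableM f g : bounded_measurable f -> bounded_measurable g ->
  bounded_measurable (fun x => f x * g x).
Proof.
move=> [mf [C HC]] [mg [D HD]]; split; first exact: measurable_funM.
by exists (C * D) => x; rewrite normrM; exact: ler_pM.
Qed.

Lemma bounded_measurableB f g : bounded_measurable f -> bounded_measurable g ->
  bounded_measurable (fun x => f x - g x).
Proof.
move=> hf [mg [D HD]]; apply: bounded_measurableD => //; split.
  exact: measurableT_comp.
by exists D => x; rewrite normrN.
Qed.

Lemma bounded_measurable_sum (I : Type) (s : seq I) (F : I -> T -> R) :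
  (forall i, bounded_measurable (F i)) ->
  bounded_measurable (fun x => \sum_(i <- s) F i x).
Proof.
move=> hF; elim: s => [|a s IH].
  by under eq_fun do rewrite big_nil; exact: bounded_measurable_cst.
by under eq_fun do rewrite big_cons; exact: bounded_measurableD.
Qed.

Lemma bounded_measurable_shift f : bounded_measurable f ->
  exists2 C, 0 <= C & forall x, 0 <= f x + C.
Proof.
move=> [_ [C HC]]; exists `|C| => // x.
by have := HC x; rewrite ler_norml => /andP[+ _]; have := ler_norm C; lra.
Qed.

Lemma bounded_measurable_kmul (M : nat) (K : 'I_M -> 'I_M -> R)
    (v : 'I_M -> T -> R) i : (forall k, bounded_measurable (v k)) ->
  bounded_measurable (fun x => kmul K (v ^~ x) i).
Proof.
move=> hv; apply: bounded_measurable_sum => k.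
exact/bounded_measurableM/hv/bounded_measurable_cst.
Qed.

Lemma bounded_measurable_kform (M : nat) (K : 'I_M -> 'I_M -> R)
    (u v : 'I_M -> T -> R) :
  (forall j, bounded_measurable (u j)) -> (forall k, bounded_measurable (v k)) ->
  bounded_measurable (fun x => kform K (u ^~ x) (v ^~ x)).
Proof.
move=> hu hv; apply: bounded_measurable_sum => j.
exact/bounded_measurableM/bounded_measurable_kmul.
Qed.

Variable mu : {measure set T -> \bar R}.
Hypothesis mu1 : mu setT = 1%E.

Lemma bounded_measurable_integrable f : bounded_measurable f ->
  mu.-integrable setT (EFin \o f).
Proof.
move=> [mf [C HC]]; apply: measurable_bounded_integrable => //.
  by rewrite mu1 ltry.
exists C; split; first by rewrite num_real.
by move=> M CM x _; apply: le_trans (HC x) (ltW CM).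
Qed.

Local Notation Rint := (Rintegral mu setT).

Lemma Rintegral_cst1 (c : R) : Rint (fun _ => c) = c.
Proof. by rewrite Rintegral_cst// mu1 /= mulr1. Qed.

Lemma RintegralE f : bounded_measurable f -> (Rint f)%:E = (\int[mu]_x (f x)%:E)%E.
Proof.
move=> hf; rewrite /Rintegral fineK//.
by apply: integrable_fin_num => //; exact: bounded_measurable_integrable.
Qed.

Lemma RintegralD_bm f g : bounded_measurable f -> bounded_measurable g ->
  Rint (fun x => f x + g x) = Rint f + Rint g.
Proof. by move=> hf hg; rewrite RintegralD//; exact: bounded_measurable_integrable. Qed.

Lemma RintegralB_bm f g : bounded_measurable f -> bounded_measurable g ->
  Rint (fun x => f x - g x) = Rint f - Rint g.
Proof. by move=> hf hg; rewrite RintegralB//; exact: bounded_measurable_integrable. Qed.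

Lemma RintegralZl_bm (c : R) f : bounded_measurable f ->
  Rint (fun x => c * f x) = c * Rint f.
Proof. by move=> hf; rewrite RintegralZl//; exact: bounded_measurable_integrable. Qed.

Lemma Rintegral_sum_bm (I : Type) (s : seq I) (F : I -> T -> R) :
  (forall i, bounded_measurable (F i)) ->
  Rint (fun x => \sum_(i <- s) F i x) = \sum_(i <- s) Rint (F i).
Proof.
move=> hF; elim: s => [|a s IH].
  by under eq_Rintegral do rewrite big_nil; rewrite Rintegral_cst1 big_nil.
under eq_Rintegral do rewrite big_cons.
by rewrite RintegralD_bm ?IH ?big_cons//; exact: bounded_measurable_sum.
Qed.

Lemma le_Rintegral_bm f g : bounded_measurable f -> bounded_measurable g ->
  (forall x, f x <= g x) -> Rint f <= Rint g.
Proof.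
by move=> hf hg fg; apply: le_Rintegral => //; exact: bounded_measurable_integrable.
Qed.

Lemma normr_Rintegral_le f (C : R) : measurable_fun setT f ->
  (forall x, `|f x| <= C) -> `|Rint f| <= C.
Proof.
move=> mf HC; have hf : bounded_measurable f by split => //; exists C.
apply: le_trans (le_normr_Rintegral measurableT (bounded_measurable_integrable hf)) _.
rewrite -[leRHS]Rintegral_cst1; apply: le_Rintegral_bm => //.
- split; first exact: measurableT_comp.
  by have [_ [D HD]] := hf; exists D => x; rewrite normr_id.
- exact: bounded_measurable_cst.
Qed.

End bounded_measurable.
Arguments bounded_measurable_cst {d T R}.

Section kernel_snd.
Context dX dY dZ (X : measurableType dX) (Y : measurableType dY)
  (Z : measurableType dZ) (R : realType) (k : R.-pker Y ~> Z).

Definition kernel_snd : X * Y -> {measure set Z -> \bar R} := k \o snd.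

Let measurable_kernel_snd U : measurable U ->
  measurable_fun [set: X * Y] (kernel_snd ^~ U).
Proof. by move=> mU; exact: (measurableT_comp (measurable_kernel k U mU)). Qed.

HB.instance Definition _ :=
  isKernel.Build _ _ _ _ _ kernel_snd measurable_kernel_snd.

Let kernel_snd_prob xy : kernel_snd xy [set: Z] = 1%E.
Proof. exact: prob_kernel. Qed.

HB.instance Definition _ :=
  Kernel_isProbability.Build _ _ _ _ _ kernel_snd kernel_snd_prob.

End kernel_snd.

Section probability_kernel_integral.
Context dW (TW : measurableType dW) dZ (Z : measurableType dZ) (R : realType).
Variable k : R.-pker TW ~> Z.

Lemma bounded_measurable_Rintegral_kernel h : bounded_measurable h ->
  bounded_measurable (fun w => Rintegral (k w) setT h).
Proof.
move=> hh; have [C _ hC0] := bounded_measurable_shift hh.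
have [_ [B hB]] := hh.
have hC := bounded_measurableD hh (bounded_measurable_cst C).
have k1 w : k w setT = 1%E by exact: prob_kernel.
split; last by exists B => w; case: hh => mh _; exact: normr_Rintegral_le.
have kE w : (\int[k w]_z (h z + C)%:E)%E = (Rintegral (k w) setT h + C)%:E.
  rewrite -RintegralE// RintegralD_bm ?Rintegral_cst1//.
  exact: bounded_measurable_cst.
have mkC : measurable_fun setT (fun w => Rintegral (k w) setT h + C).
  apply/measurable_EFinP; rewrite (_ : _ \o _ = fun w => \int[k w]_z (h z + C)%:E)%E.
    apply: measurable_fun_integral_kernel; first exact: measurable_kernel.
      by move=> z; rewrite lee_fin.
    by apply/measurable_EFinP; case: hC.
  by apply/funext => w; rewrite /= kE.
rewrite (_ : (fun w => _) = fun w => Rintegral (k w) setT h + C - C).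
  exact/measurable_funB.
by apply/funext => w; rewrite addrK.
Qed.

End probability_kernel_integral.

Section disintegration.
Context dW (TW : measurableType dW) dZ (Z : measurableType dZ) (R : realType).
Variables (muW : probability TW R) (k : R.-pker TW ~> Z)
  (m : {measure set Z -> \bar R}).
Hypothesis mE : forall B, measurable B -> m B = (\int[muW]_w k w B)%E.

(* [m] is the composition of the constant kernel [muW] with [k]. *)
Lemma ge0_integral_disintegration f : (forall z, 0 <= f z)%E ->
  measurable_fun setT f -> (\int[m]_z f z = \int[muW]_w \int[k w]_z f z)%E.
Proof.
move=> f0 mf.
have mmuW : measurable_fun [set: unit] (fun=> muW : pprobability TW R).
  exact: measurable_cst.
rewrite (eq_measure_integral (kcomp (kprobability mmuW) (kernel_snd (X := unit) k) tt)).
  by rewrite integral_kcomp.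
by move=> B mB _; rewrite mE.
Qed.

Lemma Rintegral_disintegration h : bounded_measurable h ->
  Rintegral m setT h = Rintegral muW setT (fun w => Rintegral (k w) setT h).
Proof.
move=> hh; have [C _ hC0] := bounded_measurable_shift hh.
have hC := bounded_measurableD hh (bounded_measurable_cst C).
have hk := bounded_measurable_Rintegral_kernel k hh.
have muW1 : muW setT = 1%E by exact: probability_setT.
have k1 w : k w setT = 1%E by exact: prob_kernel.
have m1 : m setT = 1%E.
  by rewrite mE// (eq_integral (cst 1%E)) ?integral_cst ?mul1e// => w _; exact: k1.
have shiftE d' (T' : measurableType d') (mu : {measure set T' -> \bar R}) f :
    mu setT = 1%E -> bounded_measurable f ->
    Rintegral mu setT f + C = Rintegral mu setT (fun x => f x + C).
  move=> mu1 hf; rewrite RintegralD_bm ?Rintegral_cst1//.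
  exact: bounded_measurable_cst.
apply: (addIr C); apply: EFin_inj.
rewrite !shiftE// !RintegralE//; last exact/bounded_measurableD/bounded_measurable_cst.
rewrite ge0_integral_disintegration//; last by apply/measurable_EFinP; case: hC.
apply: eq_integral => w _.
by rewrite -RintegralE// RintegralD_bm ?Rintegral_cst1//; exact: bounded_measurable_cst.
Qed.

End disintegration.

Section finite_density.
Context d (T : measurableType d) (R : realType).
Local Open Scope ereal_scope.
Variables mu m : {measure set T -> \bar R}.
Hypotheses (muT : mu setT < +oo) (mT : m setT < +oo).

Local Notation mu' := (mfrestr measurableT muT).
Local Notation m' := (mfrestr measurableT mT).

Let integral_mfrestrT (nu : {measure set T -> \bar R}) (nuT : nu setT < +oo) D f :
  \int[mfrestr measurableT nuT]_(x in D) f x = \int[nu]_(x in D) f x.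
Proof. by apply: eq_measure_integral => A mA _; rewrite /= /mfrestr /mrestr setIT. Qed.

Lemma density_exists : m `<< mu -> exists g : T -> R,
  [/\ forall z, (0 <= g z)%R, measurable_fun setT g &
      forall A, measurable A -> m A = \int[mu]_(z in A) (g z)%:E].
Proof.
move=> mmu.
have m'mu' : m' `<< mu'.
  apply/null_content_dominatesP => A mA; rewrite /= /mfrestr /mrestr !setIT.
  by move/null_content_dominatesP : mmu; apply.
have [f [f0 ffin fint fE]] := radon_nikodym_sigma_finite m'mu'.
exists (fine \o f); split.
- by move=> z; exact: fine_ge0.
- exact/measurableT_comp/(measurable_int _ fint).
- move=> A mA; have -> : m A = m' A by rewrite /= /mfrestr /mrestr setIT.
  by rewrite fE// integral_mfrestrT; apply: eq_integral => z _; rewrite /= fineK.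
Qed.

Variable g : T -> R.
Hypotheses (mg : measurable_fun setT g)
  (mE : forall A, measurable A -> m A = \int[mu]_(z in A) (g z)%:E).

(* The density [g] agrees [mu]-a.e. with the Radon-Nikodym derivative of [m]. *)
Lemma integral_density f : (forall z, 0 <= f z) -> measurable_fun setT f ->
  \int[m]_z f z = \int[mu]_z (f z * (g z)%:E).
Proof.
move=> f0 mf.
have m'mu' : m' `<< mu'.
  apply/null_content_dominatesP => A mA; rewrite /= /mfrestr /mrestr !setIT => muA0.
  by rewrite mE// null_set_integral//; exact/measurable_funTS/measurable_EFinP.
have r_int := Radon_Nikodym_SigmaFinite.f_integrable m'mu'.
have rg : ae_eq mu' setT (Radon_Nikodym_SigmaFinite.f m' mu') (EFin \o g).
  apply: integral_ae_eq => //; first exact/measurable_EFinP.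
  move=> A _ mA; rewrite -Radon_Nikodym_SigmaFinite.f_integral//.
  by rewrite integral_mfrestrT /= /mfrestr /mrestr setIT mE.
rewrite -(integral_mfrestrT mT).
rewrite -(Radon_Nikodym_SigmaFinite.change_of_variables m'mu' f0 measurableT)//.
rewrite -(integral_mfrestrT muT); apply: ae_eq_integral => //.
- exact/emeasurable_funM/(measurable_int _ r_int).
- by apply: emeasurable_funM => //; exact/measurable_EFinP.
- exact: ae_eqe_mul2l.
Qed.

End finite_density.

Lemma ge0_integral_sumZl d (T : measurableType d) (R : realType)
    (mu : {measure set T -> \bar R}) (I : Type) (s : seq I)
    (c : I -> R) (F : I -> T -> R) :
  (forall i, 0 <= c i) -> (forall i z, 0 <= F i z) ->
  (forall i, measurable_fun setT (F i)) ->
  (\int[mu]_z (\sum_(i <- s) c i * F i z)%:E =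
   \sum_(i <- s) (c i)%:E * \int[mu]_z (F i z)%:E)%E.
Proof.
move=> c0 F0 mF; under eq_integral do rewrite -sumEFin.
rewrite ge0_integral_sum//; last 2 first.
- by move=> i; apply/measurable_EFinP/measurable_funM => //; exact: measurable_cst.
- by move=> i z _; rewrite lee_fin mulr_ge0.
apply: eq_bigr => i _; under eq_integral do rewrite EFinM.
rewrite ge0_integralZl//; first exact/measurable_EFinP.
  by move=> z _; rewrite lee_fin.
by rewrite lee_fin.
Qed.

Section mixture.
Context d (T : measurableType d) (R : realType) (M : nat) (pi : 'I_M -> R)
  (Rm : 'I_M -> {measure set T -> \bar R}).
Hypothesis pi_ge0 : forall i, 0 <= pi i.

Definition mixture : {measure set T -> \bar R} :=
  msum (fun k => if insub k is Some i then mscale (NngNum (pi_ge0 i)) (Rm i)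
                 else mzero) M.

Lemma mixtureE A : mixture A = (\sum_(i < M) (pi i)%:E * Rm i A)%E.
Proof. by apply: eq_bigr => i _; rewrite valK. Qed.

Lemma ge0_integral_mixture D f : measurable D ->
  (forall x, D x -> 0 <= f x)%E -> measurable_fun D f ->
  (\int[mixture]_(x in D) f x =
   \sum_(i < M) (pi i)%:E * \int[Rm i]_(x in D) f x)%E.
Proof.
move=> mD f0 mf; rewrite ge0_integral_measure_sum//; apply: eq_bigr => i _.
by rewrite valK ge0_integral_mscale.
Qed.

End mixture.

Section normalized_weight.
Context d (T : measurableType d) (R : realType) (M : nat) (pi : 'I_M -> R)
  (g : 'I_M -> T -> R).

Definition weighted_sum z := \sum_(k < M) pi k * g k z.

Definition normalized_weight j z := pi j * g j z / weighted_sum z.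

Hypotheses (pi_ge0 : forall i, 0 <= pi i) (g_ge0 : forall i z, 0 <= g i z).

Let weighted_sum_ge_term j z : pi j * g j z <= weighted_sum z.
Proof.
rewrite /weighted_sum (bigD1 j)//= lerDl.
by apply: sumr_ge0 => k _; exact: mulr_ge0.
Qed.

Lemma weighted_sum_normalized j z :
  weighted_sum z * normalized_weight j z = pi j * g j z.
Proof.
have [s0|s_neq0] := eqVneq (weighted_sum z) 0; last by rewrite mulrC divfK.
rewrite s0 mul0r; apply/esym/eqP; rewrite eq_le mulr_ge0// andbT -s0.
exact: weighted_sum_ge_term.
Qed.

Lemma normalized_weight01 j z : 0 <= normalized_weight j z <= 1.
Proof.
have s_ge0 : 0 <= weighted_sum z by apply: sumr_ge0 => k _; exact: mulr_ge0.
rewrite /normalized_weight divr_ge0 ?mulr_ge0//=.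
have [s0|s_neq0] := eqVneq (weighted_sum z) 0; first by rewrite s0 invr0 mulr0.
have s_gt0 : 0 < weighted_sum z by rewrite lt_neqAle eq_sym s_neq0.
by rewrite ler_pdivrMr// mul1r weighted_sum_ge_term.
Qed.

Lemma measurable_normalized_weight j :
  (forall i, measurable_fun setT (g i)) -> measurable_fun setT (normalized_weight j).
Proof.
move=> mg; apply/measurable_funM; first exact/measurable_funM.
by apply/measurable_funV/measurable_sum => k; exact/measurable_funM.
Qed.

End normalized_weight.

Definition EK_tangent d (T : measurableType d) (R : realType) (M : nat)
    (pi : 'I_M -> R) (K : 'I_M -> 'I_M -> R)
    (Rm : 'I_M -> {measure set T -> \bar R}) (q : 'I_M -> T -> R) : R :=
  \sum_(i < M) pi i * Rintegral (Rm i) setT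
    (fun z => 2 * kmul K (q ^~ z) i - kform K (q ^~ z) (q ^~ z)).

Section cond_prob.
Context d (T : measurableType d) (R : realType) (M : nat) (pi : 'I_M -> R)
  (Rm : 'I_M -> {measure set T -> \bar R}).
Hypotheses (pi_gt0 : forall i, 0 < pi i) (Rm1 : forall i, Rm i setT = 1%E).

Let pi_ge0 i : 0 <= pi i. Proof. exact: ltW. Qed.

Local Notation mix := (mixture Rm pi_ge0).

Let mixT : (mix setT < +oo)%E.
Proof.
by rewrite mixtureE; under eq_bigr do rewrite Rm1 mule1; rewrite sumEFin ltry.
Qed.

Let RmT i : (Rm i setT < +oo)%E. Proof. by rewrite Rm1 ltry. Qed.

Let Rm_dominated i : Rm i `<< mix.
Proof.
apply/null_content_dominatesP => A mA mixA0.
have /eqP : (\sum_(k < M) (pi k)%:E * Rm k A = 0)%E by rewrite -mixtureE; exact: mixA0.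
rewrite (bigD1 i)//= padde_eq0; last 2 first.
- by rewrite mule_ge0// lee_fin.
- by apply: sume_ge0 => k _; rewrite mule_ge0// lee_fin.
by case/andP => /eqP/eqP; rewrite mule_eq0 eqe (gt_eqF (pi_gt0 i)) => /eqP.
Qed.

(* Normalizing the densities [g i] of the [Rm i] with respect to the mixture by
   their weighted sum makes the version [0,1]-valued everywhere, not only a.e. *)
Lemma cond_prob_exists : exists q, is_cond_prob pi Rm q.
Proof.
have /choice[g gP] i := density_exists mixT (RmT i) (Rm_dominated i).
have g0 i z : 0 <= g i z by have [] := gP i.
have mg i : measurable_fun setT (g i) by have [] := gP i.
have gE i A : measurable A -> Rm i A = (\int[mix]_(z in A) (g i z)%:E)%E.
  by have [_ _] := gP i; apply.
pose q := normalized_weight pi g.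
have q01 j z : 0 <= q j z <= 1 by exact: normalized_weight01.
exists q => j; split => //; first exact: measurable_normalized_weight.
move=> A mA.
have q1A_ge0 z : 0 <= q j z * \1_A z by rewrite mulr_ge0//; case/andP: (q01 j z).
have mq1A : measurable_fun setT (fun z => q j z * \1_A z).
  apply: measurable_funM; last exact: measurable_indic.
  exact: measurable_normalized_weight.
have integral_q i : (\int[Rm i]_(z in A) (q j z)%:E =
    \int[mix]_z (g i z * (q j z * \1_A z))%:E)%E.
  rewrite integral_mkcond (eq_integral (fun z => (q j z * \1_A z)%:E)); last first.
    by move=> z _; rewrite /patch indicE; case: ifP; rewrite ?mulr1 ?mulr0.
  rewrite (integral_density mixT (RmT i) (mg i) (gE i))//; last exact/measurable_EFinP.
  by apply: eq_integral => z _; rewrite -EFinM mulrC.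
rewrite (eq_bigr (fun i => (pi i)%:E *
    \int[mix]_z (g i z * (q j z * \1_A z))%:E)%E); last first.
  by move=> i _; rewrite integral_q.
rewrite -ge0_integral_sumZl//; last 2 first.
- by move=> i z; rewrite mulr_ge0.
- by move=> i; exact/measurable_funM.
rewrite (eq_integral (fun z => (pi j)%:E * (g j z * \1_A z)%:E)%E); last first.
  move=> z _; rewrite -EFinM; congr EFin.
  transitivity (weighted_sum pi g z * q j z * \1_A z).
    by rewrite /weighted_sum !mulr_suml; apply: eq_bigr => i _; ring.
  by rewrite (weighted_sum_normalized pi_ge0 g0) mulrA.
rewrite ge0_integralZl//; last 3 first.
- exact/measurable_EFinP/measurable_funM/measurable_indic.
- by move=> z _; rewrite lee_fin mulr_ge0.
- by rewrite lee_fin.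
rewrite gE// integral_mkcond; congr (_ * _)%E; apply: eq_integral => z _.
by rewrite /patch indicE; case: ifP; rewrite ?mulr1 ?mulr0.
Qed.

Local Notation q := (cond_prob pi Rm).
Local Notation Rint i := (Rintegral (Rm i) setT).

Lemma cond_probP : is_cond_prob pi Rm q.
Proof.
rewrite /cond_prob; case: pselect => [h|nh]; first by case: (cid h).
by exfalso; apply: nh; exact: cond_prob_exists.
Qed.

Lemma bounded_measurable_cond_prob j : bounded_measurable (q j).
Proof.
have [mq q01 _] := cond_probP j; split => //; exists 1 => z.
by have /andP[q0 q1] := q01 z; rewrite ger0_norm.
Qed.

(* [pi j * Rm j] has density [q j] with respect to the mixture. *)
Lemma ge0_integral_cond_prob j (h : T -> R) :
  (forall z, 0 <= h z) -> measurable_fun setT h ->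
  ((pi j)%:E * \int[Rm j]_z (h z)%:E =
   \sum_(i < M) (pi i)%:E * \int[Rm i]_z (q j z * h z)%:E)%E.
Proof.
move=> h0 mh; have [mq q01 qE] := cond_probP j.
have q0 z : 0 <= q j z by case/andP: (q01 z).
pose m : {measure set T -> \bar R} := mscale (NngNum (pi_ge0 j)) (Rm j).
have mT : (m setT < +oo)%E.
  by change ((pi j)%:E * Rm j setT < +oo)%E; rewrite Rm1 mule1 ltry.
have mE A : measurable A -> m A = (\int[mix]_(z in A) (q j z)%:E)%E.
  move=> mA; rewrite -[LHS]/((pi j)%:E * Rm j A)%E qE// ge0_integral_mixture//.
    by move=> z _; rewrite lee_fin.
  exact/measurable_funTS/measurable_EFinP.
have -> : ((pi j)%:E * \int[Rm j]_z (h z)%:E = \int[m]_z (h z)%:E)%E.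
  rewrite ge0_integral_mscale//; first exact/measurable_EFinP.
  by move=> z _; rewrite lee_fin.
rewrite (integral_density mixT mT mq mE)//; last exact/measurable_EFinP.
rewrite ge0_integral_mixture//; last 2 first.
- by move=> z _; rewrite lee_fin mulr_ge0.
- exact/measurable_EFinP/measurable_funM.
apply: eq_bigr => i _; congr (_ * _)%E.
by apply: eq_integral => z _; rewrite -EFinM mulrC.
Qed.

Lemma Rintegral_cond_prob j (h : T -> R) : bounded_measurable h ->
  \sum_(i < M) pi i * Rint i (fun z => q j z * h z) = pi j * Rint j h.
Proof.
have hq := bounded_measurable_cond_prob j.
have ge0_case g : (forall z, 0 <= g z) -> bounded_measurable g ->
    \sum_(i < M) pi i * Rint i (fun z => q j z * g z) = pi j * Rint j g.
  move=> g0 hg; apply/EFin_inj; rewrite EFinM RintegralE// ge0_integral_cond_prob//.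
    rewrite -sumEFin; apply: eq_bigr => i _; rewrite EFinM RintegralE//.
    exact: bounded_measurableM.
  by case: hg.
move=> hh; have [C C0 hC0] := bounded_measurable_shift hh.
have hC : bounded_measurable (fun _ : T => C) by exact: bounded_measurable_cst.
have hqh := bounded_measurableM hq hh.
have hqC := bounded_measurableM hq hC.
have := ge0_case _ hC0 (bounded_measurableD hh hC).
under eq_bigr => i _.
  rewrite (@eq_Rintegral _ _ _ _ _ (fun z => q j z * h z + q j z * C)); last first.
    by move=> z _; rewrite mulrDr.
  rewrite RintegralD_bm// mulrDr.
  over.
rewrite big_split /= RintegralD_bm// mulrDr (ge0_case (fun _ => C))//.
exact: addIr.
Qed.

Lemma Rintegral_cond_prob_sum (G : 'I_M -> T -> R) :
  (forall j, bounded_measurable (G j)) ->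
  \sum_(i < M) pi i * Rint i (fun z => \sum_(j < M) q j z * G j z) =
  \sum_(j < M) pi j * Rint j (G j).
Proof.
move=> hG; have sumE i : Rint i (fun z => \sum_(j < M) q j z * G j z) =
    \sum_(j < M) Rint i (fun z => q j z * G j z).
  apply: Rintegral_sum_bm => // j.
  exact/bounded_measurableM/hG/bounded_measurable_cond_prob.
under eq_bigr do rewrite sumE mulr_sumr.
by rewrite exchange_big; apply: eq_bigr => j _; exact: Rintegral_cond_prob.
Qed.

Section tangent.
Variable K : 'I_M -> 'I_M -> R.

Let Rintegral_kform_cond_prob v : (forall k, bounded_measurable (v k)) ->
  \sum_(i < M) pi i * Rint i (fun z => kform K (q ^~ z) (v ^~ z)) =
  \sum_(i < M) pi i * Rint i (fun z => kmul K (v ^~ z) i).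
Proof.
move=> hv; apply: (Rintegral_cond_prob_sum (G := fun j z => kmul K (v ^~ z) j)) => j.
exact: bounded_measurable_kmul.
Qed.

Let EK_tangentE v : (forall k, bounded_measurable (v k)) ->
  EK_tangent pi K Rm v = \sum_(i < M) pi i *
    Rint i (fun z => 2 * kform K (q ^~ z) (v ^~ z) - kform K (v ^~ z) (v ^~ z)).
Proof.
move=> hv; have hq := bounded_measurable_cond_prob.
have hvv := bounded_measurable_kform K hv hv.
have splitE (F : 'I_M -> T -> R) : (forall i, bounded_measurable (F i)) ->
    \sum_(i < M) pi i * Rint i (fun z => 2 * F i z - kform K (v ^~ z) (v ^~ z)) =
    2 * (\sum_(i < M) pi i * Rint i (F i)) -
    \sum_(i < M) pi i * Rint i (fun z => kform K (v ^~ z) (v ^~ z)).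
  move=> hF; rewrite mulr_sumr -sumrB; apply: eq_bigr => i _.
  rewrite RintegralB_bm ?RintegralZl_bm//; first ring.
  exact/bounded_measurableM/hF/bounded_measurable_cst.
rewrite /EK_tangent splitE; last by move=> i; exact: bounded_measurable_kmul.
rewrite splitE; last by move=> i; exact: bounded_measurable_kform.
by rewrite Rintegral_kform_cond_prob.
Qed.

Lemma EK_cond_tangent : EK_cond pi K Rm = EK_tangent pi K Rm q.
Proof.
have hq := bounded_measurable_cond_prob.
rewrite EK_tangentE// -[LHS]/(\sum_(i < M) pi i * Rint i (fun z => kmul K (q ^~ z) i)).
rewrite -Rintegral_kform_cond_prob//; apply: eq_bigr => i _; congr (_ * _).
by apply: eq_Rintegral => z _; rewrite mulr2n mulrDl mul1r addrK.
Qed.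

Lemma EK_tangent_le v : is_kernel K -> (forall k, bounded_measurable (v k)) ->
  EK_tangent pi K Rm v <= EK_cond pi K Rm.
Proof.
move=> hK hv; have hq := bounded_measurable_cond_prob.
rewrite EK_tangentE// -[leRHS]/(\sum_(i < M) pi i * Rint i (fun z => kmul K (q ^~ z) i)).
rewrite -Rintegral_kform_cond_prob//; apply: ler_sum => i _.
rewrite ler_wpM2l// le_Rintegral_bm//; last by move=> z; exact: kform_tangent_le.
- apply: bounded_measurableB; last exact: bounded_measurable_kform.
  apply: bounded_measurableM; first exact: bounded_measurable_cst.
  exact: bounded_measurable_kform.
- exact: bounded_measurable_kform.
Qed.

Lemma normr_EK_cond_le :
  `|EK_cond pi K Rm| <= \sum_(i < M) pi i * \sum_(j < M) `|K i j|.
Proof.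
rewrite -[EK_cond _ _ _]/(\sum_(i < M) pi i * Rint i (fun z => kmul K (q ^~ z) i)).
apply: le_trans (ler_norm_sum _ _ _) _; apply: ler_sum => i _.
rewrite normrM gtr0_norm// ler_pM2l//.
apply: (@normr_Rintegral_le _ _ _ _ (Rm1 i) (fun z => kmul K (q ^~ z) i)).
  by case: (bounded_measurable_kmul K i bounded_measurable_cond_prob).
move=> z; apply: le_trans (ler_norm_sum _ _ _) _; apply: ler_sum => j _.
have [_ q01 _] := cond_probP j; have /andP[q0 q1] := q01 z.
by rewrite normrM (ger0_norm q0) ler_piMr.
Qed.

Hypothesis D_gt0 : 0 < EK_diag pi K - EK_indep pi K.
Local Notation D := (EK_diag pi K - EK_indep pi K).

Lemma KMD_ge_tangent v : is_kernel K -> (forall k, bounded_measurable (v k)) ->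
  (EK_tangent pi K Rm v - EK_indep pi K) / D <= KMD pi K Rm.
Proof. by move=> hK hv; rewrite ler_pM2r ?invr_gt0// lerD2r; exact: EK_tangent_le. Qed.

Lemma normr_KMD_le :
  `|KMD pi K Rm| <= (\sum_(i < M) pi i * \sum_(j < M) `|K i j| + `|EK_indep pi K|) / D.
Proof.
rewrite /KMD normrM normfV (gtr0_norm D_gt0) ler_pM2r ?invr_gt0//.
by apply: le_trans (ler_normB _ _) _; rewrite lerD2r; exact: normr_EK_cond_le.
Qed.

End tangent.

End cond_prob.

Section EK_tangent_disintegration.
Context dW (TW : measurableType dW) dZ (Z : measurableType dZ) (R : realType)
  (M : nat) (pi : 'I_M -> R) (K : 'I_M -> 'I_M -> R)
  (kappa : 'I_M -> R.-pker TW ~> Z) (v : 'I_M -> Z -> R).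
Hypothesis hv : forall k, bounded_measurable (v k).

Let integrand i z := 2 * kmul K (v ^~ z) i - kform K (v ^~ z) (v ^~ z).

Let bounded_measurable_integrand i : bounded_measurable (integrand i).
Proof.
apply: bounded_measurableB; last exact: bounded_measurable_kform.
apply: bounded_measurableM; first exact: bounded_measurable_cst.
exact: bounded_measurable_kmul.
Qed.

Lemma bounded_measurable_EK_tangent_kernel :
  bounded_measurable (fun w => EK_tangent pi K (fun i => kappa i w) v).
Proof.
apply: bounded_measurable_sum => i; apply: bounded_measurableM.
  exact: bounded_measurable_cst.
exact/bounded_measurable_Rintegral_kernel/bounded_measurable_integrand.
Qed.

Lemma EK_tangent_disintegration (muW : probability TW R)
    (P : 'I_M -> {measure set Z -> \bar R}) :
  (forall i B, measurable B -> P i B = (\int[muW]_w kappa i w B)%E) ->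
  EK_tangent pi K P v =
    Rintegral muW setT (fun w => EK_tangent pi K (fun i => kappa i w) v).
Proof.
move=> PE; have muW1 : muW setT = 1%E by exact: probability_setT.
rewrite /EK_tangent Rintegral_sum_bm//; last first.
  move=> i; apply: bounded_measurableM; first exact: bounded_measurable_cst.
  exact/bounded_measurable_Rintegral_kernel/bounded_measurable_integrand.
apply: eq_bigr => i _; rewrite RintegralZl_bm//.
  congr (_ * _).
  exact: (Rintegral_disintegration (PE i) (bounded_measurable_integrand i)).
exact/bounded_measurable_Rintegral_kernel/bounded_measurable_integrand.
Qed.

End EK_tangent_disintegration.

Unset Implicit Arguments.
Theorem corollary1 (R : realType) (M : nat)
    (pi : 'I_M -> R) (K : 'I_M -> 'I_M -> R)
    (dW : measure_display) (TW : measurableType dW)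
    (dZ : measure_display) (Z : measurableType dZ)
    (muW : probability TW R)
    (Q : 'I_M -> probability (TW * Z)%type R)
    (P : 'I_M -> probability Z R)
    (kappa : 'I_M -> R.-pker TW ~> Z) :
  (forall i, 0 < pi i < 1) ->
  \sum_(i < M) pi i = 1 ->
  is_kernel K ->
  EK_diag pi K - EK_indep pi K > 0 ->
  (* Q i is the joint law of (W, Y_i); the law of W is muW in each pair *)
  (forall i A, measurable A -> Q i (A `*` setT) = muW A) ->
  (* Y_i ~ P_i *)
  (forall i B, measurable B -> Q i (setT `*` B) = P i B) ->
  (* kappa i is the conditional distribution of Y_i given W *)
  (forall i A B, measurable A -> measurable B ->
     Q i (A `*` B) = (\int[muW]_(w in A) kappa i w B)%E) ->
  (* the expectation E_W[ eta(Y_1|W,...,Y_M|W) ] is well defined *)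
  measurable_fun setT (fun w => KMD pi K (fun i => kappa i w)) ->
  ((KMD pi K (fun i => P i))%:E <=
     \int[muW]_w (KMD pi K (fun i => kappa i w))%:E)%E.
Proof.
move=> pi01 _ hK D_gt0 _ QP Qk mKMD.
have pi_gt0 i : 0 < pi i by case/andP: (pi01 i).
have muW1 : muW setT = 1%E by exact: probability_setT.
have P1 i : P i setT = 1%E by exact: probability_setT.
have kappa1 w i : kappa i w setT = 1%E by exact: prob_kernel.
have PE i B : measurable B -> P i B = (\int[muW]_w kappa i w B)%E.
  by move=> mB; rewrite -QP// Qk.
pose v := cond_prob pi (fun i => P i).
have hv := bounded_measurable_cond_prob pi_gt0 P1.
have hT := bounded_measurable_EK_tangent_kernel pi K kappa hv.
have hX := bounded_measurableB hT (bounded_measurable_cst (EK_indep pi K)).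
have hKMD : bounded_measurable (fun w => KMD pi K (fun i => kappa i w)).
  by split => //; eexists => w; exact: (normr_KMD_le pi_gt0 (kappa1 w) D_gt0).
have KMDP : KMD pi K (fun i => P i) = Rintegral muW setT
    (fun w => (EK_tangent pi K (fun i => kappa i w) v - EK_indep pi K) /
              (EK_diag pi K - EK_indep pi K)).
  rewrite RintegralZr//; last exact: bounded_measurable_integrable hX.
  rewrite RintegralB_bm ?Rintegral_cst1//; last exact: bounded_measurable_cst.
  by rewrite -(EK_tangent_disintegration pi K hv PE) /KMD (EK_cond_tangent pi_gt0 P1).
rewrite -RintegralE// lee_fin KMDP; apply: le_Rintegral_bm => //.
- exact: bounded_measurableM hX (bounded_measurable_cst _).
- by move=> w; exact: (KMD_ge_tangent pi_gt0 (kappa1 w) D_gt0 hK hv).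
Qed.
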